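(* Consider the last week of the FRS model with performance vector $W=[1,2,0,1]$ before that week and weights $v_1=v_2=1$, $v_3=v_4\le 1$. Then for each $i\in\{1,2,3,4\}$, the probability $E_i(\pi)$ that $a_i$ wins the championship is the same for all action vectors $\pi=(\pi_1,\pi_2,\pi_3,\pi_4)\in[0,1]^4$ with $\pi_1=\pi_2$ and $\pi_3=\pi_4$.
   Context: FRS model: four teams $a_1,\dots,a_4$ with weights $v_1\ge v_2\ge v_3\ge v_4>0$; $p_{ij}=v_i/(v_i+v_j)$. In the last regular-season week the games $a_1$ vs $a_2$ and $a_3$ vs $a_4$ are played simultaneously. Team $a_i$ tries to win with probability $\pi_i$ and loses intentionally with probability $1-\pi_i$, independently. If both teams in a game try, $a_i$ beats $a_j$ with probability $p_{ij}$; if exactly one tries, it wins with probability 1; if both lose intentionally, a fair coin decides. $W$ gives wins before the last week. After the season teams are seeded by total wins (descending), ties broken by assigning the tied seed positions uniformly at random; knockout: seed 1 vs seed 4, seed 2 vs seed 3, winners meet in the final, tournament games won by $a_i$ over $a_j$ with probability $p_{ij}$. *)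

From HB Require Import structures.
From mathcomp Require Import all_boot all_order all_algebra all_fingroup.
Set Implicit Arguments. Unset Strict Implicit. Unset Printing Implicit Defensive.
Import Order.TTheory GRing.Theory Num.Theory.
Local Open Scope ring_scope.

(* Teams a_1..a_4 are represented by 'I_4 with a_k = tm (k-1). *)
Definition tm (k : nat) : 'I_4 := inord k.

Section FRS.
Variable R : realFieldType.
Variable v : 'I_4 -> R.

Definition pw (i j : 'I_4) : R := v i / (v i + v j).

(* probability that a_i beats a_j in a last-week game, given the action
   probabilities pi (pi k = probability that a_k tries to win) *)
Definition gameP (pi : 'I_4 -> R) (i j : 'I_4) : R :=
  pi i * pi j * pw i j + pi i * (1 - pi j) * 1 + (1 - pi i) * pi j * 0
  + (1 - pi i) * (1 - pi j) / 2%:R.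

(* knockout tournament: semifinals x vs y and u vs z, winners meet in final;
   probability that team i becomes champion *)
Definition tour (x y u z i : 'I_4) : R :=
  if i == x then pw x y * (pw u z * pw x u + pw z u * pw x z)
  else if i == y then pw y x * (pw u z * pw y u + pw z u * pw y z)
  else if i == u then pw u z * (pw x y * pw u x + pw y x * pw u y)
  else if i == z then pw z u * (pw x y * pw z x + pw y x * pw z y)
  else 0.

(* a seeding s maps seed position (0 = seed 1, ..., 3 = seed 4) to a team *)
Definition valid_seeding (Wf : 'I_4 -> nat) (s : {perm 'I_4}) : bool :=
  [forall a : 'I_4, forall b : 'I_4, (a < b)%N ==> (Wf (s b) <= Wf (s a))%N].

(* champion probability given final win totals Wf: the seeding is uniform
   among all orderings by descending wins (ties broken uniformly at random);
   seed 1 vs seed 4, seed 2 vs seed 3 *)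
Definition champ_given (Wf : 'I_4 -> nat) (i : 'I_4) : R :=
  (\sum_(s : {perm 'I_4} | valid_seeding Wf s)
      tour (s (tm 0)) (s (tm 3)) (s (tm 1)) (s (tm 2)) i)
  / (#|[pred s : {perm 'I_4} | valid_seeding Wf s]|)%:R.

Definition final_wins (W : 'I_4 -> nat) (w1 w2 : 'I_4) (k : 'I_4) : nat :=
  (W k + (k == w1) + (k == w2))%N.

Definition E (W : 'I_4 -> nat) (pi : 'I_4 -> R) (i : 'I_4) : R :=
  \sum_(b1 : bool) \sum_(b2 : bool)
    (if b1 then gameP pi (tm 0) (tm 1) else gameP pi (tm 1) (tm 0)) *
    (if b2 then gameP pi (tm 2) (tm 3) else gameP pi (tm 3) (tm 2)) *
    champ_given (final_wins W (if b1 then tm 0 else tm 1)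
                              (if b2 then tm 2 else tm 3)) i.

End FRS.

Definition W0 (k : 'I_4) : nat := nth 0%N [:: 1; 2; 0; 1]%N k.

Definition vw (R : realFieldType) (w : R) (k : 'I_4) : R :=
  if (k < 2)%N then 1 else w.

(* When the two teams of a last-week game have equal weights and equal action
   probabilities, the game is a fair coin: if both try, p_ij = 1/2; if neither
   tries, a coin decides; and "only a_i tries" and "only a_j tries" are equally
   likely.  Under the hypotheses both games a_1 vs a_2 and a_3 vs a_4 are of
   this kind, so E_i(pi) is the average of the championship probabilities over
   the four equally likely outcomes of the week, which does not involve pi. *)
From HB Require Import structures.
From mathcomp Require Import all_boot all_order all_algebra all_fingroup.
From mathcomp Require Import ring.
Import Order.TTheory GRing.Theory Num.Theory.
Local Open Scope ring_scope.

Section FairGames.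
Variables (R : realFieldType) (v : 'I_4 -> R).

Lemma pw_eq_half (a b : 'I_4) : v a = v b -> 0 < v a -> pw v a b = 1 / 2%:R.
Proof.
move=> vab va_gt0; rewrite /pw -vab.
by field; rewrite gt_eqF // addr_gt0.
Qed.

Lemma gameP_eq_half (pi : 'I_4 -> R) (a b : 'I_4) :
  v a = v b -> 0 < v a -> pi a = pi b -> gameP v pi a b = 1 / 2%:R.
Proof. by move=> vab va_gt0 piab; rewrite /gameP piab pw_eq_half //; field. Qed.

Lemma E_fair_games (W : 'I_4 -> nat) (pi : 'I_4 -> R) (i : 'I_4) :
  v (tm 0) = v (tm 1) -> 0 < v (tm 0) -> v (tm 2) = v (tm 3) -> 0 < v (tm 2) ->
  pi (tm 0) = pi (tm 1) -> pi (tm 2) = pi (tm 3) ->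
  E v W pi i =
    (\sum_(b1 : bool) \sum_(b2 : bool)
       champ_given v (final_wins W (if b1 then tm 0 else tm 1)
                                   (if b2 then tm 2 else tm 3)) i) / 4%:R.
Proof.
move=> v01 v0_gt0 v23 v2_gt0 pi01 pi23.
have v1_gt0 : 0 < v (tm 1) by rewrite -v01.
have v3_gt0 : 0 < v (tm 3) by rewrite -v23.
rewrite /E !big_bool /= !gameP_eq_half //.
by field.
Qed.

End FairGames.

Lemma vw_pairs {R : realFieldType} (w : R) :
  vw w (tm 0) = 1 /\ vw w (tm 1) = 1 /\ vw w (tm 2) = w /\ vw w (tm 3) = w.
Proof. by rewrite /vw /tm !inordK. Qed.

Theorem corollary2 (R : realFieldType) (w : R) (hw0 : 0 < w) (hw1 : w <= 1)
  (pi pi' : 'I_4 -> R)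
  (hpi : forall k, 0 <= pi k <= 1) (hpi' : forall k, 0 <= pi' k <= 1)
  (h12 : pi (tm 0) = pi (tm 1)) (h34 : pi (tm 2) = pi (tm 3))
  (h12' : pi' (tm 0) = pi' (tm 1)) (h34' : pi' (tm 2) = pi' (tm 3))
  (i : 'I_4) :
  E (vw w) W0 pi i = E (vw w) W0 pi' i.
Proof.
have [v0 [v1 [v2 v3]]] := vw_pairs w.
have v01 : vw w (tm 0) = vw w (tm 1) by rewrite v0 v1.
have v23 : vw w (tm 2) = vw w (tm 3) by rewrite v2 v3.
have v0_gt0 : 0 < vw w (tm 0) by rewrite v0 ltr01.
have v2_gt0 : 0 < vw w (tm 2) by rewrite v2.
by rewrite !E_fair_games.
Qed.
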